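(* Let $G$ be a finite abelian group and $A$ a finite dimensional $G$-graded algebra with a regular grading with bicharacter $\beta$ whose regular decomposition is minimal, and assume $A_0$ is a local algebra. If $J(A_0)\neq0$, then there exist a commutative local subalgebra $\mathscr{U}$ of $A$ (namely $\mathscr U=K+J(A_0)$) and a 2-cocycle $\alpha\in H^2(G,K^* )$ inducing $\beta$ such that $A\cong K^\alpha G\otimes\mathscr{U}$ as $G$-graded algebras, where $\mathscr U$ carries the trivial grading. If $J(A_0)=0$, then $A\cong K^\alpha G$ as $G$-graded algebras.
   Context: All algebras are associative with unit over an algebraically closed field $K$ of characteristic $0$; $G$ finite abelian, written additively, neutral element $0$. A $G$-graded algebra $A$ has a regular grading if (i) for every $n$ and every $(g_1,\dots,g_n)\in G^n$ there exist $a_i\in A_{g_i}$ with $a_1\cdots a_n\ne0$, and (ii) there is $\beta\colon G\times G\to K^*$ with $a_ga_h=\beta(g,h)a_ha_g$ for all homogeneous $a_g,a_h$ ($\beta$ = bicharacter). The regular decomposition is minimal if there do not exist $g\neq h$ with $\beta(x,g)=\beta(x,h)$ for all $x\in G$. A commutative algebra $S$ is local if $S/J(S)\cong K$, $J$ the Jacobson radical. For a 2-cocycle $\alpha$, $K^\alpha G$ has basis $\{X_g\}$ with $X_gX_h=\alpha(g,h)X_{g+h}$, graded by $(K^\alpha G)_g=KX_g$; $\alpha$ induces $\beta$ if $\beta(g,h)=\alpha(g,h)\alpha(h,g)^{-1}$. Trivial grading: $V_0=V$, $V_g=0$ for $g\ne0$; tensor products are graded by $(V\otimes W)_g=\bigoplus_{h+k=g}V_h\otimes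 W_k$. *)

From HB Require Import structures.
From mathcomp Require Import all_boot all_order all_algebra all_field.
Set Implicit Arguments. Unset Strict Implicit. Unset Printing Implicit Defensive.
Import GRing.Theory.
Local Open Scope ring_scope.

Definition graded (K : fieldType) (A : falgType K) (G : finZmodType)
    (Ag : G -> {vspace A}) : Prop :=
  [/\ directv (\sum_(g : G) Ag g)%VS,
      (\sum_(g : G) Ag g)%VS = fullv &
      forall (g h : G) (a b : A), a \in Ag g -> b \in Ag h -> a * b \in Ag (g + h)].

Definition regular_grading (K : fieldType) (A : falgType K) (G : finZmodType)
    (Ag : G -> {vspace A}) (beta : G -> G -> K) : Prop :=
  [/\ (forall (n : nat) (gs : 'I_n -> G),
         exists a : 'I_n -> A, (forall i, a i \in Ag (gs i)) /\ \prod_(i < n) a i != 0),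
      (forall g h : G, beta g h != 0) &
      (forall (g h : G) (a b : A), a \in Ag g -> b \in Ag h -> a * b = beta g h *: (b * a))].

Definition minimal_decomp (K : fieldType) (G : finZmodType) (beta : G -> G -> K) : Prop :=
  ~ (exists g h : G, g != h /\ forall x : G, beta x g = beta x h).

Definition subalgebra (K : fieldType) (A : falgType K) (S : A -> Prop) : Prop :=
  [/\ S 1,
      (forall x y, S x -> S y -> S (x + y)),
      (forall (c : K) x, S x -> S (c *: x)) &
      (forall x y, S x -> S y -> S (x * y))].

Definition left_ideal_in (K : fieldType) (A : falgType K) (S : A -> Prop)
    (M : {vspace A}) : Prop :=
  (forall m, m \in M -> S m) /\ (forall s m, S s -> m \in M -> s * m \in M).

Definition maximal_left_ideal (K : fieldType) (A : falgType K) (S : A -> Prop)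
    (M : {vspace A}) : Prop :=
  [/\ left_ideal_in S M,
      (exists s, S s /\ s \notin M) &
      (forall N : {vspace A}, left_ideal_in S N -> (M <= N)%VS ->
          N = M \/ (forall s, S s -> s \in N))].

Definition jacobson (K : fieldType) (A : falgType K) (S : A -> Prop) (x : A) : Prop :=
  S x /\ forall M : {vspace A}, maximal_left_ideal S M -> x \in M.

(* A commutative algebra S is local if S / J(S) = K, i.e. the natural map
   K -> S -> S/J(S) is onto: every element of S is a scalar modulo J(S). *)
Definition local_alg (K : fieldType) (A : falgType K) (S : A -> Prop) : Prop :=
  (forall x y, S x -> S y -> x * y = y * x) /\
  (forall x, S x -> exists c : K, jacobson S (x - c%:A)).

Definition cocycle (K : fieldType) (G : finZmodType) (alpha : G -> G -> K) : Prop :=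
  (forall g h, alpha g h != 0) /\
  (forall g h k, alpha g h * alpha (g + h) k = alpha h k * alpha g (h + k)).

Definition induces (K : fieldType) (G : finZmodType) (alpha beta : G -> G -> K) : Prop :=
  forall g h, beta g h = alpha g h / alpha h g.

(* Model of K^alpha G (x) U for a commutative subalgebra U of A:
   sum_g X_g (x) u_g  <->  the function g |-> u_g with values in U;
   (X_g (x) u)(X_h (x) v) = alpha(g,h) X_(g+h) (x) uv.
   Degree g component: functions supported on {g}. *)
Definition twmul (K : fieldType) (A : falgType K) (G : finZmodType)
    (alpha : G -> G -> K) (f f' : {ffun G -> A}) : {ffun G -> A} :=
  [ffun k => \sum_(g : G) alpha g (k - g) *: (f g * f' (k - g))].

Definition graded_iso_tensor (K : fieldType) (A : falgType K) (G : finZmodType)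
    (Ag : G -> {vspace A}) (alpha : G -> G -> K) (U : A -> Prop) : Prop :=
  exists phi : {ffun G -> A} -> A,
  [/\ (forall (c : K) (f f' : {ffun G -> A}), (forall g, U (f g)) -> (forall g, U (f' g)) ->
          phi [ffun g => c *: f g + f' g] = c *: phi f + phi f'),
      (forall f f' : {ffun G -> A}, (forall g, U (f g)) -> (forall g, U (f' g)) ->
          phi (twmul alpha f f') = phi f * phi f'),
      (forall f f' : {ffun G -> A}, (forall g, U (f g)) -> (forall g, U (f' g)) ->
          phi f = phi f' -> f = f'),
      (forall a : A, exists f : {ffun G -> A}, (forall g, U (f g)) /\ phi f = a) &
      (forall (g : G) (f : {ffun G -> A}), (forall h, U (f h)) -> (forall h, h != g -> f h = 0) ->
          phi f \in Ag g)].

(* Model of the twisted group algebra K^alpha G: sum_g c_g X_g <-> g |-> c_g. *)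
Definition twmulK (K : fieldType) (G : finZmodType) (alpha : G -> G -> K)
    (f f' : {ffun G -> K}) : {ffun G -> K} :=
  [ffun k => \sum_(g : G) alpha g (k - g) * (f g * f' (k - g))].

Definition graded_iso_twisted (K : fieldType) (A : falgType K) (G : finZmodType)
    (Ag : G -> {vspace A}) (alpha : G -> G -> K) : Prop :=
  exists phi : {ffun G -> K} -> A,
  [/\ (forall (c : K) (f f' : {ffun G -> K}), phi [ffun g => c * f g + f' g] = c *: phi f + phi f'),
      (forall f f' : {ffun G -> K}, phi (twmulK alpha f f') = phi f * phi f'),
      (forall f f' : {ffun G -> K}, phi f = phi f' -> f = f'),
      (forall a : A, exists f : {ffun G -> K}, phi f = a) &
      (forall (g : G) (f : {ffun G -> K}), (forall h, h != g -> f h = 0) -> phi f \in Ag g)].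

From HB Require Import structures.
From mathcomp Require Import all_boot all_order all_algebra all_field.
From mathcomp Require Import fingroup cyclic ring zify.
From Stdlib Require Import Classical FunctionalExtensionality PropExtensionality.
Set Implicit Arguments. Unset Strict Implicit. Unset Printing Implicit Defensive.
Import GRing.Theory.
Local Open Scope ring_scope.

(* A_0 is central (beta (0, h) = 1), commutative and local, so A_0 = K + J with
   J = J(A_0) nilpotent by Nakayama's lemma, and the elements of A_0 outside J
   are units.  If A_g A_-g were contained in J, the alternating products of
   elements of A_g and A_-g that regularity makes nonzero would lie in a vanishing
   power of J; hence every A_g contains a unit u_g and A = sum_g u_g A_0.
   With n = |G| invertible in K, the elements of 1 + J have n-th roots (lift a
   root of T^n - (1 + X) modulo a power of X), so u_g can be rescaled until u_g^n
   is a scalar.  Then c = u_g u_h u_(g+h)^-1 is a unit of A_0 with scalar n-th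
   power; writing c = l (1 + j), we get (1 + j)^n = 1, which forces j = 0.  Thus
   u_g u_h = alpha(g, h) u_(g+h) with alpha a cocycle inducing beta, and
   X_g (x) a |-> u_g a is a graded isomorphism K^alpha G (x) A_0 -> A, where
   A_0 = K + J(A_0). *)

Lemma mulrn_card_eq0 (G : finZmodType) (g : G) : g *+ #|G| = 0.
Proof. by have := @expg_cardG G [set: G] g (in_setT g); rewrite cardsT FinRing.zmodXgE. Qed.

Lemma reindex_subr (V : nmodType) (G : finZmodType) (F : G -> V) h :
  \sum_(k : G) F (k - h) = \sum_(k : G) F k.
Proof. by rewrite [RHS](reindex_inj (can_inj (subrK h))). Qed.

Lemma scaler_injv (K : fieldType) (V : lmodType K) (v : V) a b :
  v != 0 -> a *: v = b *: v -> a = b.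
Proof.
move=> nz_v /eqP; rewrite -subr_eq0 -scalerBl scaler_eq0 (negPf nz_v) orbF subr_eq0.
by move/eqP.
Qed.

Lemma vspace_maximal (K : fieldType) (vT : vectType K) (P : {vspace vT} -> Prop) U :
  P U -> exists M, [/\ P M, (U <= M)%VS & forall N, P N -> (M <= N)%VS -> N = M].
Proof.
have [k] := ubnP (\dim (fullv : {vspace vT}) - \dim U)%N.
elim: k U => [//|k IH] U codimU PU.
case: (classic (exists N, [/\ P N, (U <= N)%VS & N != U])) => [[N [PN sUN neNU]]|noN].
  have ltUN : (\dim U < \dim N)%N by rewrite (ltn_leqif (dimv_leqif_eq sUN)) eq_sym.
  have [|M [PM sNM maxM]] := IH N _ PN; first by have := dimvS (subvf N); lia.
  by exists M; split => //; apply: subv_trans sNM.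
exists U; split => // N PN sUN.
by apply: NNPP => neNU; apply: noN; exists N; split => //; apply/eqP.
Qed.

Lemma vspace_chain_stable (K : fieldType) (vT : vectType K) (U : nat -> {vspace vT}) :
  (forall k, (U k.+1 <= U k)%VS) -> exists k, U k.+1 = U k.
Proof.
move=> decU; apply: NNPP => noeq.
have dimU k : (\dim (U k) + k <= \dim (U 0))%N.
  elim: k => [|k IH]; first by rewrite addn0.
  have lt_dim : (\dim (U k.+1) < \dim (U k))%N.
    rewrite (ltn_leqif (dimv_leqif_eq (decU k))).
    by apply/eqP => e; apply: noeq; exists k.
  lia.
by have := dimU (\dim (U 0)).+1; rewrite addnS ltnNge leq_addl.
Qed.

Lemma exprDn_mod_sqr (R : comNzRingType) (x y : R) n :
  exists t, (x + y) ^+ n = x ^+ n + y * x ^+ n.-1 *+ n + y ^+ 2 * t.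
Proof.
elim: n => [|n [t IH]]; first by exists 0; rewrite !expr0 mulr0n mulr0 !addr0.
case: n IH => [|n] IH; first by exists 0; rewrite !expr1 expr0 mulr1 mulr0 addr0.
exists (x ^+ n *+ n.+1 + t * x + y * t).
rewrite exprSr IH /= (exprS x n.+1) (exprS x n).
move: (x ^+ n) (n.+1) => z N.
rewrite mulrS -[y * z *+ N]mulr_natr -[y * (x * z) *+ N]mulr_natr -[z *+ N]mulr_natr.
move: (N%:R) => c; ring.
Qed.

Lemma coef0X (K : fieldType) (p : {poly K}) k : (p ^+ k)`_0 = p`_0 ^+ k.
Proof. by rewrite -!horner_coef0 horner_exp. Qed.

(* Hensel lifting, one power of X at a time. *)
Lemma truncated_nth_root_1X (K : fieldType) n M : (n%:R : K) != 0 ->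
  exists p : {poly K}, p`_0 = 1 /\ exists q, p ^+ n - (1 + 'X) = 'X^(M.+1) * q.
Proof.
move=> nK; elim: M => [|M [p [p0 [q Hq]]]].
  exists 1; split; first by rewrite coef1.
  by exists (-1); rewrite expr1n expr1 mulrN1 opprD addrA subrr add0r.
pose D := (q`_0 / n%:R)%:P; pose y := - (D * 'X^(M.+1)).
have [t Ht] := exprDn_mod_sqr p y n.
have HD : D * n%:R = (q`_0)%:P by rewrite /D -polyC_natr -polyCM divfK.
pose r := q - (q`_0)%:P * p ^+ n.-1 + D ^+ 2 * 'X^(M.+1) * t.
have Er : (p + y) ^+ n - (1 + 'X) = 'X^(M.+1) * r.
  have Hpn : p ^+ n = 1 + 'X + 'X^(M.+1) * q by rewrite -Hq addrC subrK.
  rewrite Ht Hpn /r -HD /y -mulr_natr.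
  move: ('X^(M.+1)) (p ^+ n.-1) (n%:R : {poly K}) => X1 P N; ring.
have r0 : r`_0 = 0.
  rewrite /r coefD coefB !coef0M !coef0X p0 expr1n coefC coefX /= mulr1 expr0n /=.
  by rewrite mulr0 mul0r addr0 subrr.
exists (p + y); split.
  by rewrite coefD p0 /y coefN coef0M coefXn /= mulr0 oppr0 addr0.
exists (drop_poly 1 r).
have Hr : r = drop_poly 1 r * 'X.
  rewrite -{1}(poly_take_drop 1 r) expr1.
  suff -> : take_poly 1 r = 0 by rewrite add0r.
  by apply/polyP => -[|i]; rewrite coef_take_poly coef0.
by rewrite Er {1}Hr mulrA mulrAC -exprSr.
Qed.

Section Graded.
Variables (K : fieldType) (G : finZmodType) (A : falgType K) (Ag : G -> {vspace A}).
Hypothesis grA : graded Ag.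

Lemma graded_mul g h a b : a \in Ag g -> b \in Ag h -> a * b \in Ag (g + h).
Proof. by case: grA => _ _; apply. Qed.

Lemma graded_decomp a : exists f : G -> A, (forall g, f g \in Ag g) /\ a = \sum_g f g.
Proof.
case: grA => _ full _.
have : a \in (\sum_g Ag g)%VS by rewrite full memvf.
by case/memv_sumP => f Hf ->; exists f; split => // g; apply: Hf.
Qed.

Lemma graded_sum_eq0 (f : G -> A) :
  (forall g, f g \in Ag g) -> \sum_g f g = 0 -> forall g, f g = 0.
Proof.
case: grA => dir _ _ Hf H0 g.
by move/directv_sum_independent: dir => /(_ f (fun i _ => Hf i) H0 g isT).
Qed.

Lemma graded_one : 1 \in Ag 0.
Proof.
have [e [He De]] := graded_decomp 1.
have e0_mul h a : a \in Ag h -> e 0 * a = a.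
  move=> Ha; pose f k := e (k - h) * a - (if k == h then a else 0).
  have Hf k : f k \in Ag k.
    rewrite /f memvB //; first by have := graded_mul (He (k - h)) Ha; rewrite subrK.
    by case: eqP => [->|_]; rewrite ?mem0v.
  have : \sum_k f k = 0.
    rewrite /f sumrB -big_distrl /= (reindex_subr e h) -De mul1r.
    by rewrite (bigD1 h) //= eqxx big1 ?addr0 ?subrr // => k /negPf ->.
  move/(graded_sum_eq0 Hf)/(_ h)/eqP.
  by rewrite /f subrr eqxx subr_eq0 => /eqP.
have : e 0 * 1 = 1.
  by rewrite {2}De {1}De mulr_sumr; apply: eq_bigr => g _; rewrite (e0_mul g).
by rewrite mulr1 => <-.
Qed.

Lemma graded_mul0l g a b : a \in Ag 0 -> b \in Ag g -> a * b \in Ag g.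
Proof. by move=> Ha Hb; have := graded_mul Ha Hb; rewrite add0r. Qed.

Lemma graded_mul0r g a b : a \in Ag g -> b \in Ag 0 -> a * b \in Ag g.
Proof. by move=> Ha Hb; have := graded_mul Ha Hb; rewrite addr0. Qed.

Lemma graded_mulN g a b : a \in Ag g -> b \in Ag (- g) -> a * b \in Ag 0.
Proof. by move=> Ha Hb; have := graded_mul Ha Hb; rewrite subrr. Qed.

Lemma graded_mulNl g a b : a \in Ag (- g) -> b \in Ag g -> a * b \in Ag 0.
Proof. by move=> Ha Hb; have := graded_mul Ha Hb; rewrite addNr. Qed.

Lemma graded_exp g x k : x \in Ag g -> x ^+ k \in Ag (g *+ k).
Proof.
move=> Hx; elim: k => [|k IH]; first by rewrite expr0 mulr0n graded_one.
by rewrite exprSr mulrSr graded_mul.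
Qed.

Lemma graded0_exp x k : x \in Ag 0 -> x ^+ k \in Ag 0.
Proof. by move/(graded_exp k); rewrite mul0rn. Qed.

Lemma graded_exp_card g x : x \in Ag g -> x ^+ #|G| \in Ag 0.
Proof. by move/(graded_exp #|G|); rewrite mulrn_card_eq0. Qed.

Lemma graded0_scalar c : c%:A \in Ag 0.
Proof. exact/memvZ/graded_one. Qed.

Variable beta : G -> G -> K.
Hypothesis regA : regular_grading Ag beta.

Lemma graded_neq0 g : exists2 a, a \in Ag g & a != 0.
Proof.
case: regA => reg _ _; have [a [Ha]] := reg 1%N (fun _ => g).
by rewrite big_ord1 => nz_a; exists (a ord0).
Qed.

Lemma regular_comm g h a b : a \in Ag g -> b \in Ag h -> a * b = beta g h *: (b * a).
Proof. by case: regA => _ _; apply. Qed.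

Lemma beta0l h : beta 0 h = 1.
Proof.
have [b Hb nz_b] := graded_neq0 h.
apply: (@scaler_injv _ _ b) => //.
by rewrite scale1r -[in RHS](mul1r b) (regular_comm graded_one Hb) mulr1.
Qed.

Lemma graded0_central g a b : a \in Ag 0 -> b \in Ag g -> a * b = b * a.
Proof. by move=> Ha Hb; rewrite (regular_comm Ha Hb) beta0l scale1r. Qed.

Lemma regular_mul_eq1C g u v : u \in Ag g -> v \in Ag (- g) -> u * v = 1 -> v * u = 1.
Proof.
move=> Hu Hv uv1.
have nz_u : u != 0 by apply: contra_eq_neq uv1 => ->; rewrite mul0r eq_sym oner_neq0.
have vu : v * u = beta (- g) g *: 1 by rewrite (regular_comm Hv Hu) uv1.
suff b1 : beta (- g) g = 1 by rewrite vu b1 scale1r.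
apply: (@scaler_injv _ _ u) => //.
by rewrite scale1r -{2}[u]mul1r -uv1 -mulrA vu -scalerAr mulr1.
Qed.

Lemma exprM_homogeneous g h x y : x \in Ag g -> y \in Ag h ->
  forall k, exists gam, (x * y) ^+ k = gam *: (x ^+ k * y ^+ k).
Proof.
move=> Hx Hy; elim=> [|k [gam IH]]; first by exists 1; rewrite !expr0 mulr1 scale1r.
exists (gam * beta (h *+ k) g).
rewrite exprSr IH -scalerAl !mulrA -(mulrA (x ^+ k)).
rewrite (regular_comm (graded_exp k Hy) Hx) -scalerAr -scalerAl scalerA.
by rewrite !mulrA -exprSr -mulrA -exprSr.
Qed.

End Graded.

Section LocalDegreeZero.
Variables (K : fieldType) (G : finZmodType) (A : falgType K) (Ag : G -> {vspace A}).
Hypothesis grA : graded Ag.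
Let A0 := fun x : A => x \in Ag 0.
Hypothesis locA : local_alg A0.
Let lid := left_ideal_in A0.

Lemma A0_comm x y : x \in Ag 0 -> y \in Ag 0 -> x * y = y * x.
Proof. by case: locA => comm _; apply: comm. Qed.

Lemma lidE M : lid M <-> (M <= Ag 0%R)%VS /\ (Ag 0%R * M <= M)%VS.
Proof.
split=> -[sM mM]; split.
- by apply/subvP => m /sM.
- by apply/prodvP => s m Ss Mm; apply: mM.
- by move=> m /(subvP sM).
- by move=> s m Ss Mm; apply: (subvP mM); apply: memv_mul.
Qed.

Lemma lid_mul M s m : lid M -> s \in Ag 0 -> m \in M -> s * m \in M.
Proof. by case=> _; apply. Qed.

Lemma lid0 : lid 0%VS.
Proof. by apply/lidE; rewrite sub0v prodv0. Qed.

Lemma lid_addv U V : lid U -> lid V -> lid (U + V)%VS.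
Proof.
move=> /lidE[sU mU] /lidE[sV mV]; apply/lidE.
by rewrite subv_add sU sV prodvDr addvS.
Qed.

Lemma lid_one M : lid M -> 1 \in M -> forall s, s \in Ag 0 -> s \in M.
Proof. by move=> lidM M1 s Ss; rewrite -(mulr1 s) lid_mul. Qed.

Definition principal (x : A) : {vspace A} := (amulr x @: Ag 0%R)%VS.

Lemma mem_principal x y : y \in principal x <-> exists2 s, s \in Ag 0 & y = s * x.
Proof.
split=> [/memv_imgP [s Ss ->]|[s Ss ->]]; first by exists s; rewrite ?lfunE.
by have := memv_img (amulr x) Ss; rewrite lfunE.
Qed.

Lemma principal_self x : x \in principal x.
Proof. by apply/mem_principal; exists 1; rewrite ?mul1r ?graded_one. Qed.

Lemma lid_principal x : x \in Ag 0 -> lid (principal x).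
Proof.
move=> Sx; split=> [m|s m Ss] /mem_principal [t St ->]; first exact: graded_mul0l.
by apply/mem_principal; exists (s * t); rewrite ?mulrA ?graded_mul0l.
Qed.

Lemma maximal_lid_one M : maximal_left_ideal A0 M -> 1 \notin M.
Proof.
case=> lidM [s [Ss sM]] _; apply: contra sM => M1.
exact: lid_one.
Qed.

Lemma exists_maximal_lid I : lid I -> 1 \notin I ->
  exists M, maximal_left_ideal A0 M /\ (I <= M)%VS.
Proof.
move=> lidI I1.
have [M [[lidM M1] sIM maxM]] :=
  @vspace_maximal _ _ (fun N => lid N /\ 1 \notin N) I (conj lidI I1).
exists M; split=> //; split=> //; first by exists 1; split; first exact: graded_one.
move=> N lidN sMN; case: (boolP (1 \in N)) => N1; first by right; apply: lid_one.
by left; apply: maxM.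
Qed.

Lemma maximal_lidE M : maximal_left_ideal A0 M -> forall x, x \in M <-> jacobson A0 x.
Proof.
move=> maxM x; split; last by case=> _; apply.
move=> xM; have Sx : A0 x by case: maxM => -[sM _] _ _; apply: sM.
case: locA => _ /(_ x Sx) [c [_ radM]]; split=> // M' /radM.
suff -> : c = 0 by rewrite scale0r subr0.
apply: contraNeq (maximal_lid_one maxM) => nz_c.
have : c%:A \in M by rewrite -[c%:A](subKr x) memvB ?radM.
by move/(memvZ c^-1); rewrite scalerA mulVf // scale1r.
Qed.

(* If Q is maximal among the ideals strictly inside P and x is in P but not
   in Q, then P = Q + A_0 x, so the annihilator of x modulo Q is maximal. *)
Lemma annihilator_maximal P Q x : lid P -> lid Q -> (Q <= P)%VS ->
  (forall Q', [/\ lid Q', (Q' <= P)%VS & Q' != P] -> (Q <= Q')%VS -> Q' = Q) ->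
  x \in P -> x \notin Q -> maximal_left_ideal A0 (Ag 0%R :&: amulr x @^-1: Q)%VS.
Proof.
move=> lidP lidQ sQP maxQ xP xnQ; set ann := (_ :&: _)%VS.
have mem_ann a : (a \in ann) = (a \in Ag 0) && (a * x \in Q).
  by rewrite memv_cap -memv_preim lfunE.
have Sx : x \in Ag 0 by case: lidP => sP _; apply: sP.
have lid_ann : lid ann.
  split=> [m|s m Ss]; rewrite !mem_ann => /andP[Sm mxQ] //.
  by rewrite graded_mul0l //= -mulrA lid_mul.
split=> //.
  by exists 1; split; [exact: graded_one | rewrite mem_ann mul1r (negPf xnQ) andbF].
move=> N lidN sannN; case: (boolP (N <= ann)%VS) => [sNann|/subvPn [a aN aNann]].
  by left; apply/eqP; rewrite eqEsubv sNann.
right; apply: (lid_one lidN).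
have Sa : a \in Ag 0 by case: lidN => sN _; apply: sN.
have axnQ : a * x \notin Q by rewrite mem_ann Sa in aNann.
have lidQ' := lid_addv lidQ (lid_principal (graded_mul0l grA Sa Sx)).
have Q'P : (Q + principal (a * x)%R)%VS = P.
  apply: NNPP => /eqP neQ'P; move/negP: axnQ; apply.
  have sQ'P : (Q + principal (a * x)%R <= P)%VS.
    rewrite subv_add sQP /=.
    by apply/subvP => y /mem_principal [s Ss ->]; rewrite !lid_mul.
  rewrite -(maxQ _ (And3 lidQ' sQ'P neQ'P) (addvSl _ _)).
  exact: subvP (addvSr _ _) _ (principal_self _).
have : x \in (Q + principal (a * x)%R)%VS by rewrite Q'P.
case/memv_addP => q qQ [y /mem_principal [s Ss ->] Ex].
have : 1 - s * a \in ann.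
  rewrite mem_ann memvB ?(graded_one grA) ?(graded_mul0l grA) //=.
  by rewrite mulrBl mul1r -mulrA {1}Ex addrK.
move/(subvP sannN)/memvD/(_ (lid_mul lidN Ss aN)).
by rewrite subrK.
Qed.

Variable J : {vspace A}.
Hypothesis maxJ : maximal_left_ideal A0 J.

Lemma lid_J : lid J.
Proof. by case: maxJ. Qed.

Lemma J_sub0 x : x \in J -> x \in Ag 0.
Proof. by case: lid_J => sJ _; apply: sJ. Qed.

Lemma J_mull s x : s \in Ag 0 -> x \in J -> s * x \in J.
Proof. exact: lid_mul lid_J. Qed.

Lemma J_mulr s x : s \in Ag 0 -> x \in J -> x * s \in J.
Proof. by move=> Ss xJ; rewrite (A0_comm (J_sub0 xJ) Ss) J_mull. Qed.

Lemma maximal_lid_subJ M : maximal_left_ideal A0 M -> (M <= J)%VS.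
Proof. by move=> maxM; apply/subvP => x /(maximal_lidE maxM) /(maximal_lidE maxJ). Qed.

Lemma scalar_inJ c : c%:A \in J -> c = 0.
Proof.
move=> cJ; apply: contraNeq (maximal_lid_one maxJ) => nz_c.
by have := memvZ c^-1 cJ; rewrite scalerA mulVf // scale1r.
Qed.

Lemma A0_modJ x : x \in Ag 0 -> exists c, x - c%:A \in J.
Proof. by move=> Sx; case: locA => _ /(_ x Sx) [c /(maximal_lidE maxJ)]; exists c. Qed.

Lemma A0_modJ_unit x : x \in Ag 0 -> x \notin J -> exists2 c, c != 0 & c^-1 *: x - 1 \in J.
Proof.
move=> Sx xnJ; have [c xcJ] := A0_modJ Sx.
have nz_c : c != 0 by apply: contraNneq xnJ => c0; rewrite -[x]subr0 -(scale0r 1) -c0.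
exists c => //.
by rewrite -[1](scale1r) -(mulVf nz_c) -scalerA -scalerBr memvZ.
Qed.

Lemma A0_unit x : x \in Ag 0 -> x \notin J -> exists y, y \in Ag 0 /\ x * y = 1.
Proof.
move=> Sx xnJ; case: (boolP (1 \in principal x)) => [/mem_principal [y Sy]|x1].
  by rewrite A0_comm // => ->; exists y.
have [M [maxM sxM]] := exists_maximal_lid (lid_principal Sx) x1.
have := subvP (maximal_lid_subJ maxM) x (subvP sxM x (principal_self x)).
by rewrite (negPf xnJ).
Qed.

Lemma J_mul_neq1 x y : x \in J -> y \in Ag 0 -> x * y != 1.
Proof.
move=> xJ Sy; apply: contraTneq (J_mulr Sy xJ) => ->.
exact: maximal_lid_one.
Qed.

Lemma nakayama P : lid P -> (P <= J * P)%VS -> P = 0%VS.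
Proof.
move=> lidP sPJP; apply: NNPP => /eqP nzP.
have [Q [[lidQ sQP neQP] _ maxQ]] :=
  @vspace_maximal _ _ (fun Q => [/\ lid Q, (Q <= P)%VS & Q != P]) 0%VS
    (And3 lid0 (sub0v P) (contra_neq esym nzP)).
suff sPQ : (P <= Q)%VS by move: neQP; rewrite eqEsubv sQP sPQ.
apply: subv_trans sPJP _; apply/prodvP => j x jJ xP.
have [xQ|xnQ] := boolP (x \in Q); first by rewrite lid_mul ?J_sub0.
have maxA := annihilator_maximal lidP lidQ sQP maxQ xP xnQ.
have : j \in (Ag 0%R :&: amulr x @^-1: Q)%VS.
  by apply/(maximal_lidE maxA)/(maximal_lidE maxJ).
by rewrite memv_cap -memv_preim lfunE => /andP[].
Qed.

Lemma lid_prodJ P : lid P -> lid (J * P)%VS /\ (J * P <= P)%VS.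
Proof.
move=> /lidE [sP0 mP]; have [sJ0 mJ] := (lidE J).1 lid_J.
have sJP : (J * P <= P)%VS := subv_trans (prodvSl P sJ0) mP.
split=> //; apply/lidE; split; first exact: subv_trans sJP sP0.
by rewrite prodvA; exact: prodvSl mJ.
Qed.

Lemma nilpotent_J : exists m, (J ^+ m = 0)%VS.
Proof.
pose P k := (J ^+ k.+1)%VS.
have PS k : P k.+1 = (J * P k)%VS by rewrite /P expvSl.
have lidP k : lid (P k).
  by elim: k => [|k IH]; [exact: lid_J | rewrite PS; exact: (lid_prodJ IH).1].
have [k eqP] : exists k, P k.+1 = P k.
  by apply: vspace_chain_stable => k; rewrite PS; exact: (lid_prodJ (lidP k)).2.
by exists k.+1; apply: nakayama (lidP k) _; rewrite -PS eqP.
Qed.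

Lemma nilpotent_memJ : exists m, forall e, e \in J -> e ^+ m = 0.
Proof.
have [m Jm0] := nilpotent_J; exists m => e eJ.
have : (<[e]> ^+ m <= J ^+ m)%VS by apply: expvS; rewrite -memvE.
by rewrite expv_line Jm0 -memvE memv0 => /eqP.
Qed.

Lemma horner_alg_A0 e p : e \in Ag 0 -> horner_alg e p \in Ag 0.
Proof.
move=> Se; elim/poly_ind: p => [|p c IH]; first by rewrite rmorph0 mem0v.
by rewrite rmorphD rmorphM /= horner_algX horner_algC memvD ?graded_mul0l ?graded0_scalar.
Qed.

Lemma nth_root_1J n e : (n%:R : K) != 0 -> e \in J ->
  exists r, [/\ r \in Ag 0, r \notin J & r ^+ n = 1 + e].
Proof.
move=> nK eJ; case: n nK => [|n] nK; first by rewrite eqxx in nK.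
have [m Jm0] := nilpotent_memJ.
have [p [p0 [q Eq]]] := truncated_nth_root_1X m nK.
have Er : horner_alg e p ^+ n.+1 = 1 + e.
  apply/eqP; rewrite -subr_eq0; apply/eqP.
  have := congr1 (horner_alg e) Eq.
  rewrite rmorphB rmorphXn rmorphD rmorph1 rmorphM rmorphXn /= horner_algX => ->.
  by rewrite exprSr (Jm0 e eJ) !mul0r.
exists (horner_alg e p); split => //; first exact/horner_alg_A0/J_sub0.
apply: contra (maximal_lid_one maxJ) => rJ.
by rewrite -(addrK e 1) memvB // -Er exprS J_mulr // graded0_exp // J_sub0.
Qed.

Lemma expr_1J_sub1 n j : j \in J -> (1 + j) ^+ n - 1 \in J.
Proof.
move=> jJ; have S1j : 1 + j \in Ag 0 by rewrite memvD ?graded_one ?J_sub0.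
elim: n => [|n IH]; first by rewrite expr0 subrr mem0v.
have -> : (1 + j) ^+ n.+1 - 1 = ((1 + j) ^+ n - 1) * (1 + j) + j.
  by rewrite exprSr mulrBl mul1r opprD addrA subrK.
by rewrite memvD // J_mulr.
Qed.

(* Binomial expansion gives (1 + j)^n = 1 + j z with z = n mod J, a unit. *)
Lemma expr_1J_eq1 n j : (n%:R : K) != 0 -> j \in J -> (1 + j) ^+ n = 1 -> j = 0.
Proof.
move=> nK jJ; case: n nK => [|n] nK; first by rewrite eqxx in nK.
have Sj := J_sub0 jJ.
pose z := \sum_(i < n.+1) j ^+ i *+ 'C(n.+1, i.+1).
have Ez : (1 + j) ^+ n.+1 = 1 + j * z.
  rewrite addrC exprD1n big_ord_recl /= expr0 bin0 mulr1n; congr (_ + _).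
  rewrite /z mulr_sumr; apply: eq_bigr => i _.
  by rewrite /bump /= add1n mulrnAr -exprS.
have Sz : z \in Ag 0 by apply: memv_suml => i _; apply/rpredMn/graded0_exp.
have zJ : z - (n.+1%:R : K)%:A \in J.
  rewrite /z big_ord_recl /= expr0 bin1 scaler_nat addrC addKr.
  apply: memv_suml => i _; apply: rpredMn.
  by rewrite exprS J_mulr // graded0_exp.
have znJ : z \notin J.
  by apply: contra nK => zJ'; apply/eqP/scalar_inJ; rewrite -(subKr z (_%:A)) memvB.
have [w [Sw zw]] := A0_unit Sz znJ.
move=> j1; have jz0 : j * z = 0 by apply: (addrI 1); rewrite -Ez j1 addr0.
by rewrite -[j]mulr1 -zw mulrA jz0 mul0r.
Qed.

Lemma scalar_of_expr_scalar n x t : (n%:R : K) != 0 -> x \in Ag 0 -> x \notin J ->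
  x ^+ n = t%:A -> exists l, x = l%:A.
Proof.
move=> nK Sx xnJ xn.
have [c nz_c jJ] := A0_modJ_unit Sx xnJ; set j := _ - 1 in jJ.
have Ex : x = c *: (1 + j) by rewrite /j addrC subrK scalerA divff // scale1r.
exists c; suff j0 : j = 0 by rewrite Ex j0 addr0.
apply: (expr_1J_eq1 nK jJ).
have Ejn : (1 + j) ^+ n = (c ^- n * t)%:A.
  by rewrite /j addrC subrK exprZn xn scalerA exprVn.
have : (c ^- n * t - 1)%:A \in J by rewrite scalerBl scale1r -Ejn expr_1J_sub1.
by move/scalar_inJ/eqP; rewrite subr_eq0 Ejn => /eqP ->; rewrite scale1r.
Qed.

Lemma A0_scalar_of_J0 x : (forall y, y \in J -> y = 0) -> x \in Ag 0 -> exists c, x = c%:A.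
Proof.
move=> J0 Sx; have [c xcJ] := A0_modJ Sx.
by exists c; apply/eqP; rewrite -subr_eq0; apply/eqP/J0.
Qed.


Variable beta : G -> G -> K.
Hypothesis regA : regular_grading Ag beta.

(* Otherwise A_g A_(-g) lies in J, and the alternating products
   a_1 b_1 ... a_m b_m a_(m+1) granted by regularity lie in J^m = 0. *)
Lemma component_prod_notinJ g :
  exists a b, [/\ a \in Ag g, b \in Ag (- g) & a * b \notin J].
Proof.
apply: NNPP => noab.
have sW : (Ag g * Ag (- g) <= J)%VS.
  apply/prodvP => a b Ha Hb; apply: NNPP => /negP abnJ.
  by apply: noab; exists a, b.
have [m Jm0] := nilpotent_J.
case: regA => reg _ _.
have [a [Ha]] := reg (m.*2).+1 (fun i => if odd i then - g else g).
apply/negP; rewrite negbK big_ord_recr /=.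
pose b i := a (inord i).
have Hb i : (i < (m.*2).+1)%N -> b i \in Ag (if odd i then - g else g).
  by move=> lti; have := Ha (inord i); rewrite inordK.
have prod_mem k : (k <= m)%N -> \prod_(i < k.*2) b i \in ((Ag g * Ag (- g)) ^+ k)%VS.
  elim: k => [|k IH] le_km; first by rewrite big_ord0 expv0 memv_line.
  rewrite doubleS !big_ord_recr /= -mulrA expvSr.
  apply: memv_mul; first exact/IH/ltnW.
  have lt1 : (k.*2 < m.*2.+1)%N by rewrite ltnS leq_double ltnW.
  have lt2 : (k.*2.+1 < m.*2.+1)%N by rewrite ltnS ltn_double.
  apply: memv_mul; first by have := Hb _ lt1; rewrite odd_double.
  by have := Hb _ lt2; rewrite /= odd_double.
have -> : \prod_(i < m.*2) a (widen_ord (leqnSn m.*2) i) = \prod_(i < m.*2) b i.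
  apply: eq_bigr => i _; congr a; apply: val_inj => /=.
  by rewrite inordK // ltnS ltnW.
have : \prod_(i < m.*2) b i \in (J ^+ m)%VS by apply: (subvP (expvS m sW)); apply: prod_mem.
by rewrite Jm0 memv0 => /eqP ->; rewrite mul0r.
Qed.

Lemma component_unit g : exists u v, [/\ u \in Ag g, v \in Ag (- g), u * v = 1 & v * u = 1].
Proof.
have [a [b [Ha Hb abnJ]]] := component_prod_notinJ g.
have [y [Sy aby]] := A0_unit (graded_mulN grA Ha Hb) abnJ.
have Hv : b * y \in Ag (- g) by apply: graded_mul0r.
have uv : a * (b * y) = 1 by rewrite mulrA.
by exists a, (b * y); split; last exact: (regular_mul_eq1C regA Ha Hv uv).
Qed.

Lemma exprM_A0 x y n : x \in Ag 0 -> y \in Ag 0 -> (x * y) ^+ n = x ^+ n * y ^+ n.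
Proof. by move=> Sx Sy; apply/exprMn_comm/A0_comm. Qed.

Hypothesis charK : [pchar K] =i pred0.

Lemma card_natr_neq0 : (#|G|%:R : K) != 0.
Proof. by rewrite ((pcharf0P K).1 charK) -lt0n; apply/card_gt0P; exists 0. Qed.

(* Rescale a unit u0 of A_g by the inverse of an n-th root of u0^n / mu. *)
Lemma normalized_component_unit g : exists u v,
  [/\ u \in Ag g, v \in Ag (- g), u * v = 1, v * u = 1 & exists s, u ^+ #|G| = s%:A].
Proof.
have [u0 [v0 [Hu0 Hv0 uv0 vu0]]] := component_unit g.
set n := #|G|.
have wz1 : u0 ^+ n * v0 ^+ n = 1.
  by rewrite -exprMn_comm ?uv0 ?expr1n // /GRing.comm uv0 vu0.
have wnJ : u0 ^+ n \notin J.
  by apply/negP => wJ; have := J_mul_neq1 wJ (graded_exp_card grA Hv0); rewrite wz1 eqxx.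
have [mu nz_mu eJ] := A0_modJ_unit (graded_exp_card grA Hu0) wnJ.
have [r [Sr rnJ Er]] := nth_root_1J card_natr_neq0 eJ.
have [r' [Sr' rr']] := A0_unit Sr rnJ.
exists (u0 * r'), (r * v0); split.
- exact: graded_mul0r.
- exact: graded_mul0l.
- by rewrite mulrA -(mulrA u0) -(A0_comm Sr Sr') rr' mulr1.
- by rewrite mulrA -(mulrA r) vu0 mulr1.
exists mu.
rewrite exprMn_comm; last by rewrite /GRing.comm (graded0_central grA regA Sr' Hu0).
have -> : u0 ^+ n = mu *: r ^+ n by rewrite Er subrKC scalerA divff // scale1r.
by rewrite -scalerAl -exprM_A0 // rr' expr1n.
Qed.

Lemma normalized_units_mul (u v : G -> A) :
  (forall g, [/\ u g \in Ag g, v g \in Ag (- g), u g * v g = 1, v g * u g = 1 &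
      exists s, u g ^+ #|G| = s%:A]) ->
  forall g h, exists a, u g * u h = a *: u (g + h).
Proof.
move=> Hu g h.
have [Hug Hvg uvg _ [sg Esg]] := Hu g.
have [Huh Hvh uvh _ [sh Esh]] := Hu h.
have [Hugh Hvgh uvgh vugh [sgh Esgh]] := Hu (g + h).
set n := #|G| in Esg Esh Esgh.
pose c := u g * u h * v (g + h).
have Sc : c \in Ag 0 := graded_mulN grA (graded_mul grA Hug Huh) Hvgh.
have cu : c * u (g + h) = u g * u h by rewrite /c -mulrA vugh mulr1.
have cnJ : c \notin J.
  pose d := u (g + h) * v h * v g.
  have Sd : d \in Ag 0.
    by have := graded_mul grA (graded_mul grA Hugh Hvh) Hvg; rewrite addrK subrr.
  have cd : c * d = 1 by rewrite /d !mulrA cu -(mulrA (u g)) uvh mulr1 uvg.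
  by apply/negP => cJ; have := J_mul_neq1 cJ Sd; rewrite cd eqxx.
have nz_sgh : sgh != 0.
  have : u (g + h) ^+ n * v (g + h) ^+ n = 1.
    by rewrite -exprMn_comm ?uvgh ?expr1n // /GRing.comm uvgh vugh.
  by apply: contra_eq_neq => s0; rewrite Esgh s0 scale0r mul0r eq_sym oner_neq0.
have [gam Egam] := exprM_homogeneous grA regA Hug Huh n.
have Ecn : c ^+ n = (sgh^-1 * (gam * (sg * sh)))%:A.
  have : c ^+ n * u (g + h) ^+ n = (gam * (sg * sh))%:A.
    rewrite -exprMn_comm; last by rewrite /GRing.comm (graded0_central grA regA Sc Hugh).
    by rewrite cu Egam Esg Esh mulr_algl !scalerA mulrA.
  rewrite Esgh mulr_algr => e.
  by rewrite -scalerA -e scalerA mulVf // scale1r.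
have [l El] := scalar_of_expr_scalar card_natr_neq0 Sc cnJ Ecn.
by exists l; rewrite -cu El mulr_algl.
Qed.

Lemma twisted_basis : exists (u v : G -> A) (alpha : G -> G -> K),
  (forall g, [/\ u g \in Ag g, v g \in Ag (- g), u g * v g = 1 & v g * u g = 1]) /\
  (forall g h, u g * u h = alpha g h *: u (g + h)).
Proof.
have unit_pair g : exists uv : A * A,
    [/\ uv.1 \in Ag g, uv.2 \in Ag (- g), uv.1 * uv.2 = 1, uv.2 * uv.1 = 1 &
        exists s, uv.1 ^+ #|G| = s%:A].
  by have [u [v Huv]] := normalized_component_unit g; exists (u, v).
have [f Hf] := fin_all_exists unit_pair.
have [a Ha] := fin_all_exists (fun gh : G * G => normalized_units_mul Hf gh.1 gh.2).
exists (fun g => (f g).1), (fun g => (f g).2), (fun g h => a (g, h)).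
by split=> [g|g h]; [have [] := Hf g | exact: (Ha (g, h))].
Qed.

End LocalDegreeZero.

Section TwistedBasis.
Variables (K : fieldType) (G : finZmodType) (A : falgType K) (Ag : G -> {vspace A}).
Variable beta : G -> G -> K.
Hypotheses (grA : graded Ag) (regA : regular_grading Ag beta).
Variables (u v : G -> A) (alpha : G -> G -> K).
Hypothesis uvK : forall g, [/\ u g \in Ag g, v g \in Ag (- g), u g * v g = 1 & v g * u g = 1].
Hypothesis u_mul : forall g h, u g * u h = alpha g h *: u (g + h).

Lemma u_mem g : u g \in Ag g. Proof. by case: (uvK g). Qed.
Lemma v_mem g : v g \in Ag (- g). Proof. by case: (uvK g). Qed.
Lemma u_mulv g : u g * v g = 1. Proof. by case: (uvK g). Qed.
Lemma v_mulu g : v g * u g = 1. Proof. by case: (uvK g). Qed.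

Lemma u_neq0 g : u g != 0.
Proof. by apply: contra_eq_neq (u_mulv g) => ->; rewrite mul0r eq_sym oner_neq0. Qed.

Lemma alpha_neq0 g h : alpha g h != 0.
Proof.
have : u g * u h * (v h * v g) = 1 by rewrite mulrA -(mulrA (u g)) u_mulv mulr1 u_mulv.
by apply: contra_eq_neq => a0; rewrite u_mul a0 scale0r !mul0r eq_sym oner_neq0.
Qed.

Lemma cocycle_alpha : cocycle alpha.
Proof.
split=> [|g h k]; first exact: alpha_neq0.
have : u g * u h * u k = u g * (u h * u k) by rewrite mulrA.
rewrite u_mul -scalerAl !u_mul -scalerAr !u_mul !scalerA addrA.
by move/(scaler_injv (u_neq0 _)); rewrite mulrC.
Qed.

Lemma induces_alpha : induces alpha beta.
Proof.
move=> g h; have := regular_comm regA (u_mem g) (u_mem h).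
rewrite !u_mul scalerA addrC => /(scaler_injv (u_neq0 _)) ->.
by rewrite mulfK // alpha_neq0.
Qed.

Definition twisted_sum (f : {ffun G -> A}) := \sum_g u g * f g.

Lemma twisted_sumD c (f f' : {ffun G -> A}) :
  twisted_sum [ffun g => c *: f g + f' g] = c *: twisted_sum f + twisted_sum f'.
Proof.
rewrite /twisted_sum scaler_sumr -big_split /=.
by apply: eq_bigr => g _; rewrite ffunE mulrDr scalerAr.
Qed.

Lemma twisted_sumM (f f' : {ffun G -> A}) : (forall g, f g \in Ag 0) ->
  twisted_sum (twmul alpha f f') = twisted_sum f * twisted_sum f'.
Proof.
move=> Sf; rewrite /twisted_sum mulr_suml.
have E g h : u g * f g * (u h * f' h) = alpha g h *: (u (g + h) * (f g * f' h)).
  rewrite mulrA -(mulrA (u g)) (graded0_central grA regA (Sf g) (u_mem h)).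
  by rewrite !mulrA u_mul -!scalerAl -mulrA.
under [RHS]eq_bigr => g _.
  rewrite mulr_sumr -(reindex_subr _ g).
  under eq_bigr => k _ do rewrite E [g + _]addrC subrK.
over.
rewrite exchange_big /=; apply: eq_bigr => k _.
by rewrite /twmul ffunE mulr_sumr; apply: eq_bigr => g _; rewrite -scalerAr.
Qed.

Lemma twisted_sum_inj (f f' : {ffun G -> A}) :
  (forall g, f g \in Ag 0) -> (forall g, f' g \in Ag 0) ->
  twisted_sum f = twisted_sum f' -> f = f'.
Proof.
move=> Sf Sf' e; apply/ffunP => g.
have Hm h : u h * (f h - f' h) \in Ag h by apply: graded_mul0r (u_mem h) (memvB _ _).
have : \sum_h u h * (f h - f' h) = 0.
  by rewrite (eq_bigr _ (fun h _ => mulrBr _ _ _)) sumrB -/(twisted_sum f) e subrr.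
move/(graded_sum_eq0 grA Hm)/(_ g)/(congr1 (fun y => v g * y)).
by rewrite mulrA v_mulu mul1r mulr0 => /eqP; rewrite subr_eq0 => /eqP.
Qed.

Lemma twisted_sum_surj a : exists f : {ffun G -> A}, (forall g, f g \in Ag 0) /\ twisted_sum f = a.
Proof.
have [e [He ->]] := graded_decomp grA a.
exists [ffun g => v g * e g]; split => [g|]; first by rewrite ffunE (graded_mulNl grA (v_mem g)).
by apply: eq_bigr => g _; rewrite ffunE mulrA u_mulv mul1r.
Qed.

Lemma twisted_sum_homogeneous g (f : {ffun G -> A}) :
  (forall h, f h \in Ag 0) -> (forall h, h != g -> f h = 0) ->
  twisted_sum f \in Ag g.
Proof.
move=> Sf f0; rewrite /twisted_sum (bigD1 g) //= big1 ?addr0 ?graded_mul0r ?u_mem //.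
by move=> h /f0 ->; rewrite mulr0.
Qed.

Lemma iso_tensor : graded_iso_tensor Ag alpha (fun x => x \in Ag 0).
Proof.
exists twisted_sum; split => [c f f' _ _|f f' Sf _|f f'|a|g f Sf f0].
- exact: twisted_sumD.
- exact: twisted_sumM.
- exact: twisted_sum_inj.
- exact: twisted_sum_surj.
- exact: twisted_sum_homogeneous.
Qed.

Lemma iso_twisted : (forall x, x \in Ag 0 -> exists c, x = c%:A) -> graded_iso_twisted Ag alpha.
Proof.
move=> A0K; pose F (f : {ffun G -> K}) := [ffun g => (f g)%:A : A].
have SF f g : F f g \in Ag 0 by rewrite ffunE graded0_scalar.
exists (fun f => twisted_sum (F f)); split => [c f f'|f f'|f f' /twisted_sum_inj|a|g f f0].
- by rewrite -twisted_sumD; congr twisted_sum; apply/ffunP => g; rewrite !ffunE scalerDl scalerA.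
- rewrite -twisted_sumM //; congr twisted_sum; apply/ffunP => k.
  rewrite !ffunE scaler_suml; apply: eq_bigr => g _.
  by rewrite !ffunE mulr_algl !scalerA mulrA.
- move=> /(_ (SF f) (SF f')) eF; apply/ffunP => g.
  have := congr1 (fun h : {ffun G -> A} => h g) eF.
  by rewrite !ffunE => /(scaler_injv (oner_neq0 _)).
- have [f [Sf <-]] := twisted_sum_surj a.
  have [c Ec] := fin_all_exists (fun g => A0K _ (Sf g)).
  by exists [ffun g => c g]; congr twisted_sum; apply/ffunP => g; rewrite !ffunE Ec.
- by apply: twisted_sum_homogeneous => // h /f0; rewrite ffunE => ->; rewrite scale0r.
Qed.

End TwistedBasis.

Theorem theorem4p16 (K : closedFieldType) (charK0 : [pchar K] =i pred0)
    (G : finZmodType) (A : falgType K) (Ag : G -> {vspace A}) (beta : G -> G -> K) :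
  graded Ag -> regular_grading Ag beta -> minimal_decomp beta ->
  local_alg (fun x : A => x \in Ag 0) ->
  ((exists x : A, jacobson (fun y : A => y \in Ag 0) x /\ x != 0) ->
     let U := fun x : A => exists (c : K) (j : A),
                jacobson (fun y : A => y \in Ag 0) j /\ x = c%:A + j in
     [/\ subalgebra U, local_alg U &
         exists alpha : G -> G -> K,
           [/\ cocycle alpha, induces alpha beta & graded_iso_tensor Ag alpha U]])
  /\
  ((forall x : A, jacobson (fun y : A => y \in Ag 0) x -> x = 0) ->
     exists alpha : G -> G -> K,
       [/\ cocycle alpha, induces alpha beta & graded_iso_twisted Ag alpha]).
Proof.
move=> grA regA _ locA.
have notin0_1 : 1 \notin (0%VS : {vspace A}) by rewrite memv0 oner_eq0.
have [J [maxJ _]] := exists_maximal_lid grA (@lid0 _ _ _ Ag) notin0_1.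
have [u [v [alpha [uvK u_mul]]]] := twisted_basis grA locA maxJ regA charK0.
have [cocycle_al induces_al] := (cocycle_alpha uvK u_mul, induces_alpha regA uvK u_mul).
split=> [_ U | J0].
  have -> : U = (fun x => x \in Ag 0).
    apply: functional_extensionality => x; apply: propositional_extensionality; split.
      by case=> c [j [[Sj _] ->]]; rewrite memvD ?graded0_scalar.
    move=> Sx; have [c xcJ] := A0_modJ locA maxJ Sx.
    by exists c, (x - c%:A); rewrite subrKC; split=> //; apply/(maximal_lidE locA maxJ).
  split=> //; last by exists alpha; split; last exact: (iso_tensor grA regA uvK u_mul).
  split=> [|x y|c x|x y Sx Sy]; [exact: graded_one grA | exact: memvD | exact: memvZ |].
  exact: (graded_mul0l grA Sx Sy).
exists alpha; split=> //; apply: (iso_twisted grA regA uvK u_mul) => x Sx.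
by apply: (A0_scalar_of_J0 locA maxJ) => // y /(maximal_lidE locA maxJ) /J0.
Qed.
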